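(* Let $\mathcal{A}$ be a unital commutative $C^*$-algebra and let $\tau:\mathcal{A}\to\mathcal{A}$ be a surjective map. Let $A,B:H_\mathcal{A}\to H_\mathcal{A}$ be injective, continuous $\tau$-quasi-modular maps with $\dim_\mathcal{A}(A(H_\mathcal{A}))\geq 2$. Suppose that for every $x\in H_\mathcal{A}$ there is $\lambda_x\in\mathcal{A}$ with $Bx=\lambda_xAx$. Then there exists $\lambda\in\mathcal{A}$ such that $B=\lambda A$.
   Context: $H_\mathcal{A}=H\otimes\mathcal{A}$ is the standard Hilbert $\mathcal{A}$-module over a separable infinite-dimensional Hilbert space $H$ (left module, inner product $\mathcal{A}$-linear in the first variable). A map $A:H_\mathcal{A}\to H_\mathcal{A}$ is called $\tau$-quasi-modular, for a map $\tau:\mathcal{A}\to\mathcal{A}$, if it is additive and $A(\lambda x)=\tau(\lambda)A(x)$ for all $\lambda\in\mathcal{A}$, $x\in H_\mathcal{A}$. $\dim_\mathcal{A}(A(H_\mathcal{A}))\ge 2$ means that $A(H_\mathcal{A})$ contains at least two nonzero mutually orthogonal elements (i.e. it is not generated by a single element). *)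

From Stdlib Require Import Reals.
Open Scope R_scope.

Definition Cplx : Type := (R * R)%type.
Definition Cadd (c d : Cplx) : Cplx := (fst c + fst d, snd c + snd d).
Definition Cmul (c d : Cplx) : Cplx :=
  (fst c * fst d - snd c * snd d, fst c * snd d + snd c * fst d).
Definition Cone : Cplx := (1, 0).
Definition Cconj (c : Cplx) : Cplx := (fst c, - snd c).
Definition Cabs (c : Cplx) : R := sqrt (fst c ^ 2 + snd c ^ 2).

Record UnitalCStarAlgebra := {
  car :> Type;
  zero : car; one : car;
  add : car -> car -> car; opp : car -> car; mul : car -> car -> car;
  scal : Cplx -> car -> car; star : car -> car; norm : car -> R;
  addA : forall x y z, add x (add y z) = add (add x y) z;
  addC : forall x y, add x y = add y x;
  add0 : forall x, add zero x = x;
  addN : forall x, add x (opp x) = zero;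
  mulA : forall x y z, mul x (mul y z) = mul (mul x y) z;
  mul1l : forall x, mul one x = x;
  mul1r : forall x, mul x one = x;
  mulDl : forall x y z, mul (add x y) z = add (mul x z) (mul y z);
  mulDr : forall x y z, mul x (add y z) = add (mul x y) (mul x z);
  scalA : forall c d x, scal (Cmul c d) x = scal c (scal d x);
  scal1 : forall x, scal Cone x = x;
  scalDr : forall c x y, scal c (add x y) = add (scal c x) (scal c y);
  scalDl : forall c d x, scal (Cadd c d) x = add (scal c x) (scal d x);
  scal_mull : forall c x y, scal c (mul x y) = mul (scal c x) y;
  scal_mulr : forall c x y, scal c (mul x y) = mul x (scal c y);
  starK : forall x, star (star x) = x;
  starD : forall x y, star (add x y) = add (star x) (star y);
  starM : forall x y, star (mul x y) = mul (star y) (star x);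
  starZ : forall c x, star (scal c x) = scal (Cconj c) (star x);
  norm_ge0 : forall x, 0 <= norm x;
  norm_eq0 : forall x, norm x = 0 -> x = zero;
  norm_triangle : forall x y, norm (add x y) <= norm x + norm y;
  normZ : forall c x, norm (scal c x) = Cabs c * norm x;
  normM : forall x y, norm (mul x y) <= norm x * norm y;
  norm_cstar : forall x, norm (mul (star x) x) = norm x ^ 2;
  complete : forall u : nat -> car,
    (forall eps, eps > 0 -> exists N, forall m n, (m >= N)%nat -> (n >= N)%nat ->
        norm (add (u m) (opp (u n))) < eps) ->
    exists l, forall eps, eps > 0 -> exists N, forall n, (n >= N)%nat ->
        norm (add (u n) (opp l)) < eps
}.

Section HilbertModule.
Variable A : UnitalCStarAlgebra.

Definition commutativeA : Prop := forall x y : A, mul A x y = mul A y x.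

Definition cvA (u : nat -> A) (l : A) : Prop :=
  forall eps, eps > 0 -> exists N, forall n, (n >= N)%nat -> norm A (add A (u n) (opp A l)) < eps.

Fixpoint psum (f : nat -> A) (n : nat) : A :=
  match n with O => zero A | S k => add A (psum f k) (f k) end.

(* Elements of H_A = H (x) A, H separable infinite-dimensional (basis indexed by nat):
   sequences x with sum_n x_n^* x_n norm-convergent in A. *)
Definition inHA (x : nat -> A) : Prop :=
  exists l, cvA (psum (fun k => mul A (star A (x k)) (x k))) l.

(* <x,y> = sum_n x_n y_n^*  (A-linear in the first variable): "ip x y l" means <x,y> = l *)
Definition ip (x y : nat -> A) (l : A) : Prop :=
  cvA (psum (fun k => mul A (x k) (star A (y k)))) l.

Definition hnorm (x : nat -> A) (r : R) : Prop :=
  exists l, ip x x l /\ r = sqrt (norm A l).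

Definition seq_sub (x y : nat -> A) : nat -> A := fun n => add A (x n) (opp A (y n)).
Definition seq_add (x y : nat -> A) : nat -> A := fun n => add A (x n) (y n).
Definition seq_smul (lam : A) (x : nat -> A) : nat -> A := fun n => mul A lam (x n).
Definition seq0 : nat -> A := fun _ => zero A.

(* A map H_A -> H_A is represented by T : (nat -> A) -> (nat -> A) mapping H_A into H_A;
   all further properties only concern its values on H_A. *)
Definition maps_HA (T : (nat -> A) -> (nat -> A)) : Prop :=
  forall x, inHA x -> inHA (T x).

Definition quasi_modular (tau : A -> A) (T : (nat -> A) -> (nat -> A)) : Prop :=
  (forall x y, inHA x -> inHA y -> T (seq_add x y) = seq_add (T x) (T y)) /\
  (forall lam x, inHA x -> T (seq_smul lam x) = seq_smul (tau lam) (T x)).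

Definition injective_HA (T : (nat -> A) -> (nat -> A)) : Prop :=
  forall x y, inHA x -> inHA y -> T x = T y -> x = y.

Definition continuous_HA (T : (nat -> A) -> (nat -> A)) : Prop :=
  forall x, inHA x -> forall eps, eps > 0 -> exists delta, delta > 0 /\
    forall y r, inHA y -> hnorm (seq_sub y x) r -> r < delta ->
      forall s, hnorm (seq_sub (T y) (T x)) s -> s < eps.

(* dim_A (T(H_A)) >= 2 : the image contains two nonzero mutually orthogonal elements *)
Definition image_dim_ge2 (T : (nat -> A) -> (nat -> A)) : Prop :=
  exists x y, inHA x /\ inHA y /\ T x <> seq0 /\ T y <> seq0 /\ ip (T x) (T y) (zero A).

End HilbertModule.

(* Proof idea.  Let e = (2^-k . 1)_k, a vector of H_A all of whose coordinates
   are invertible, and let l0 be a coefficient with B e = l0 A e.  We show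
   B x = l0 A x for every x in H_A.

   For a predicate P on the indices that is eventually constant, the
      masked vector (x_k if P k, else 0) again lies in H_A.
   2. Disjoint images.  If y and z have disjoint supports and c A y = d A z,
      then c A y = 0: writing c = tau c', d = tau d' (surjectivity of tau),
      injectivity of A gives c' y = d' z, hence c' y = 0.
   3. Splitting.  If B x = lx A x, then B y = lx A y for every mask y of x:
      write x = y + z with z the complementary mask and apply 2.
   4. For each index k, the k-th coordinate of x is a multiple of the k-th
      coordinate of e, so by 3 both lx and l0 are coefficients for it; using
      injectivity of A once more, (lx - l0) annihilates every coordinate of x,
      whence (lx - l0) A x = 0. *)
From Stdlib Require Import Reals Lra Lia Ring FunctionalExtensionality.

Section StandardModule.
Variable A : UnitalCStarAlgebra.
Hypothesis comm : commutativeA A.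

Definition subA (x y : A) : A := add A x (opp A y).

Lemma A_ring_theory :
  ring_theory (zero A) (one A) (add A) (mul A) subA (opp A) (@eq (car A)).
Proof.
constructor; intros.
- apply add0.
- apply addC.
- apply addA.
- apply mul1l.
- apply comm.
- apply mulA.
- apply mulDl.
- reflexivity.
- apply addN.
Qed.
Add Ring A_ring : A_ring_theory.

Lemma add_self_eq0 (x : A) : x = add A x x -> x = zero A.
Proof.
intro H.
assert (E : add A x (opp A x) = add A (add A x x) (opp A x)) by (rewrite <- H; reflexivity).
transitivity (add A (add A x x) (opp A x)); [ring | rewrite <- E; ring].
Qed.

Lemma star0 : star A (zero A) = zero A.
Proof. apply add_self_eq0. rewrite <- starD. f_equal. ring. Qed.

Lemma scal0 (x : A) : scal A (0%R, 0%R) x = zero A.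
Proof. apply add_self_eq0. rewrite <- scalDl. f_equal. unfold Cadd; simpl. f_equal; ring. Qed.

Lemma norm0 : norm A (zero A) = 0%R.
Proof.
rewrite <- (scal0 (zero A)), normZ. unfold Cabs; simpl.
replace (0 * (0 * 1) + 0 * (0 * 1))%R with 0%R by ring. rewrite sqrt_0; ring.
Qed.

Lemma scal_real_add (a b : R) (x : A) :
  add A (scal A (a, 0%R) x) (scal A (b, 0%R) x) = scal A ((a + b)%R, 0%R) x.
Proof. rewrite <- scalDl. f_equal. unfold Cadd; simpl. f_equal; ring. Qed.

Lemma scal_real_sub (a b : R) (x : A) :
  subA (scal A (a, 0%R) x) (scal A (b, 0%R) x) = scal A ((a - b)%R, 0%R) x.
Proof.
replace (scal A (a, 0%R) x) with (scal A ((a - b + b)%R, 0%R) x) by (f_equal; f_equal; ring).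
rewrite <- (scal_real_add (a - b) b x). unfold subA; ring.
Qed.

Lemma star_one : star A (one A) = one A.
Proof.
rewrite <- (mul1r A (star A (one A))).
rewrite <- (starK A (one A)) at 2.
rewrite <- starM, mul1r. apply starK.
Qed.

Lemma star_real_one (a : R) : star A (scal A (a, 0%R) (one A)) = scal A (a, 0%R) (one A).
Proof. rewrite starZ, star_one. unfold Cconj; simpl. rewrite Ropp_0. reflexivity. Qed.

Lemma mul_real_one (a b : R) :
  mul A (scal A (a, 0%R) (one A)) (scal A (b, 0%R) (one A)) = scal A ((a * b)%R, 0%R) (one A).
Proof. rewrite <- scal_mull, mul1l, <- scalA. f_equal. unfold Cmul; simpl. f_equal; ring. Qed.

Lemma Cabs_real (a : R) : Cabs (a, 0%R) = Rabs a.
Proof.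
unfold Cabs; simpl.
replace (a * (a * 1) + 0 * (0 * 1))%R with (Rsqr a) by (unfold Rsqr; ring).
apply sqrt_Rsqr_abs.
Qed.

Lemma smul_sub_eq0 (a b : A) (v : nat -> A) :
  seq_smul A (subA a b) v = seq0 A <-> seq_smul A a v = seq_smul A b v.
Proof.
unfold seq_smul, seq0, subA; split; intro H; apply functional_extensionality; intro k;
  assert (Hk := equal_f H k); simpl in Hk.
- transitivity (add A (mul A (add A a (opp A b)) (v k)) (mul A b (v k))); [ring|].
  rewrite Hk; ring.
- transitivity (add A (mul A a (v k)) (opp A (mul A b (v k)))); [ring|].
  rewrite Hk; ring.
Qed.

Lemma psum_ext (f g : nat -> A) : (forall k, f k = g k) -> forall n, psum A f n = psum A g n.
Proof. intros H n; induction n; simpl; [reflexivity | rewrite IHn, H; reflexivity]. Qed.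

Lemma psum_mul (a : A) (f : nat -> A) n :
  psum A (fun k => mul A a (f k)) n = mul A a (psum A f n).
Proof. induction n; simpl; [ring | rewrite IHn; ring]. Qed.

Lemma inHA_seq0 : inHA A (seq0 A).
Proof.
exists (zero A). intros eps He. exists 0%nat. intros n _.
rewrite (psum_ext _ (fun _ => zero A)) by (intro; unfold seq0; rewrite star0; ring).
replace (psum A (fun _ => zero A) n) with (zero A).
- rewrite addN, norm0; lra.
- induction n; simpl; [reflexivity | rewrite <- IHn; ring].
Qed.

(* H_A is stable under multiplication by scalars of A: the partial sums of
   <c x, c x> are c^* c times those of <x, x>. *)
Lemma inHA_smul (c : A) (x : nat -> A) : inHA A x -> inHA A (seq_smul A c x).
Proof.
intros [l Hl]. set (a := mul A (star A c) c).
exists (mul A a l). intros eps He.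
assert (Ha := norm_ge0 A a).
set (q := (eps / (norm A a + 1))%R).
assert (Hq : q > 0) by (apply Rdiv_lt_0_compat; lra).
assert (Hqe : (q * (norm A a + 1))%R = eps) by (unfold q; field; lra).
destruct (Hl q Hq) as [N HN]. exists N. intros n Hn. specialize (HN n Hn).
set (s := psum A (fun k => mul A (star A (x k)) (x k)) n) in HN.
rewrite (psum_ext _ (fun k => mul A a (mul A (star A (x k)) (x k))))
  by (intro k; unfold seq_smul, a; rewrite starM; ring).
rewrite psum_mul. fold s.
replace (add A (mul A a s) (opp A (mul A a l))) with (mul A a (add A s (opp A l))) by ring.
eapply Rle_lt_trans; [apply normM|].
assert (Hd := norm_ge0 A (add A s (opp A l))).
set (d := norm A (add A s (opp A l))) in *.
nra.
Qed.

Lemma quasi_modular_zero (tau : A -> A) (T : (nat -> A) -> (nat -> A)) :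
  quasi_modular A tau T -> T (seq0 A) = seq0 A.
Proof.
intros [Tadd _].
assert (E : seq_add A (seq0 A) (seq0 A) = seq0 A)
  by (apply functional_extensionality; intro; unfold seq_add, seq0; ring).
assert (H := Tadd (seq0 A) (seq0 A) inHA_seq0 inHA_seq0). rewrite E in H.
apply functional_extensionality; intro k. apply add_self_eq0. exact (equal_f H k).
Qed.

Definition mask (P : nat -> bool) (x : nat -> A) : nat -> A :=
  fun k => if P k then x k else zero A.

Definition eventually_const (P : nat -> bool) : Prop :=
  exists N, forall k, (N <= k)%nat -> P k = P N.

Lemma eventually_const_negb (P : nat -> bool) :
  eventually_const P -> eventually_const (fun k => negb (P k)).
Proof. intros [N H]; exists N; intros k Hk; rewrite H; auto. Qed.

Lemma psum_mask_on (f : nat -> A) (P : nat -> bool) N :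
  (forall k, (N <= k)%nat -> P k = true) -> forall m, (N <= m)%nat ->
  psum A (fun k => if P k then f k else zero A) m =
  add A (psum A (fun k => if P k then f k else zero A) N) (subA (psum A f m) (psum A f N)).
Proof.
intros HP m; induction m; intro Hm.
- assert (N = 0%nat) by lia; subst. unfold subA; ring.
- destruct (Nat.eq_dec N (S m)) as [->|Hne]; [unfold subA; ring|].
  simpl. rewrite IHm, (HP m) by lia. unfold subA; ring.
Qed.

Lemma psum_mask_off (f : nat -> A) (P : nat -> bool) N :
  (forall k, (N <= k)%nat -> P k = false) -> forall m, (N <= m)%nat ->
  psum A (fun k => if P k then f k else zero A) m =
  psum A (fun k => if P k then f k else zero A) N.
Proof.
intros HP m; induction m; intro Hm.
- assert (N = 0%nat) by lia; subst. reflexivity.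
- destruct (Nat.eq_dec N (S m)) as [->|Hne]; [reflexivity|].
  simpl. rewrite IHm, (HP m) by lia. ring.
Qed.

Lemma inHA_mask (P : nat -> bool) (x : nat -> A) :
  inHA A x -> eventually_const P -> inHA A (mask P x).
Proof.
intros [l Hl] [N HN].
set (f := fun k => mul A (star A (x k)) (x k)).
set (g := fun k => if P k then f k else zero A).
assert (Hg : forall n, psum A (fun k => mul A (star A (mask P x k)) (mask P x k)) n = psum A g n).
{ apply psum_ext; intro k; unfold mask, g, f; destruct (P k); [reflexivity | rewrite star0; ring]. }
unfold inHA, cvA in *. destruct (P N) eqn:EPN.
- exists (add A (psum A g N) (subA l (psum A f N))).
  intros eps He. destruct (Hl eps He) as [N0 HN0]. exists (max N N0). intros n Hn.
  rewrite Hg. unfold g. rewrite (psum_mask_on f P N) by (try lia; intros; rewrite HN by lia; auto).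
  fold g.
  replace (add A (add A (psum A g N) (subA (psum A f n) (psum A f N)))
             (opp A (add A (psum A g N) (subA l (psum A f N)))))
    with (add A (psum A f n) (opp A l)) by (unfold subA; ring).
  apply HN0; lia.
- exists (psum A g N). intros eps He. exists N. intros n Hn.
  rewrite Hg. unfold g. rewrite (psum_mask_off f P N) by (try lia; intros; rewrite HN by lia; auto).
  rewrite addN, norm0. lra.
Qed.

Lemma mask_split (P : nat -> bool) (x : nat -> A) :
  x = seq_add A (mask P x) (mask (fun k => negb (P k)) x).
Proof.
apply functional_extensionality; intro k. unfold seq_add, mask.
destruct (P k); simpl; ring.
Qed.

Definition coord (k : nat) (x : nat -> A) : nat -> A := mask (Nat.eqb k) x.

Lemma eventually_const_coord (k : nat) : eventually_const (Nat.eqb k).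
Proof.
exists (S k). intros j Hj.
destruct (Nat.eqb_spec k j), (Nat.eqb_spec k (S k)); try lia; reflexivity.
Qed.

Lemma inHA_coord (k : nat) (x : nat -> A) : inHA A x -> inHA A (coord k x).
Proof. intro Hx. apply inHA_mask; [exact Hx | apply eventually_const_coord]. Qed.

Definition geom : nat -> A := fun k => scal A (((/2) ^ k)%R, 0%R) (one A).
Definition geom_inv : nat -> A := fun k => scal A ((2 ^ k)%R, 0%R) (one A).

Lemma geom_inv_geom k : mul A (geom_inv k) (geom k) = one A.
Proof.
unfold geom_inv, geom. rewrite mul_real_one, <- Rpow_mult_distr, Rinv_r by lra.
rewrite pow1. apply scal1.
Qed.

Lemma psum_geom n :
  psum A (fun k => mul A (star A (geom k)) (geom k)) n
  = scal A ((4/3 * (1 - (/4) ^ n))%R, 0%R) (one A).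
Proof.
induction n; simpl.
- replace (4/3 * (1 - 1))%R with 0%R by field. rewrite scal0. reflexivity.
- rewrite IHn. unfold geom. rewrite star_real_one, mul_real_one, scal_real_add.
  f_equal. f_equal. rewrite <- Rpow_mult_distr.
  replace (/2 * /2)%R with (/4)%R by field. field.
Qed.

Lemma inHA_geom : inHA A geom.
Proof.
exists (scal A ((4/3)%R, 0%R) (one A)). intros eps He.
assert (H1 := norm_ge0 A (one A)).
set (q := (eps / (4/3 * (norm A (one A) + 1)))%R).
assert (Hq : q > 0) by (apply Rdiv_lt_0_compat; lra).
assert (Hqe : (q * (4/3 * (norm A (one A) + 1)))%R = eps) by (unfold q; field; lra).
destruct (pow_lt_1_zero (/4) ltac:(rewrite Rabs_pos_eq; lra) q Hq) as [N HN].
exists N. intros n Hn.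
rewrite psum_geom. fold (subA (scal A ((4/3 * (1 - (/4) ^ n))%R, 0%R) (one A))
                              (scal A ((4/3)%R, 0%R) (one A))).
rewrite scal_real_sub, normZ, Cabs_real.
replace (4/3 * (1 - (/4) ^ n) - 4/3)%R with (- (4/3) * (/4) ^ n)%R by ring.
rewrite Rabs_mult, Rabs_Ropp, (Rabs_pos_eq (4/3)) by lra.
specialize (HN n Hn). assert (Rabs ((/4) ^ n) >= 0) by apply Rle_ge, Rabs_pos.
nra.
Qed.

Lemma coord_geom (k : nat) (x : nat -> A) :
  coord k x = seq_smul A (mul A (x k) (geom_inv k)) (coord k geom).
Proof.
apply functional_extensionality; intro j. unfold coord, mask, seq_smul.
destruct (Nat.eqb_spec k j) as [<-|]; [|ring].
rewrite <- mulA, geom_inv_geom. ring.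
Qed.

Section CoefficientMaps.
Variable tau : A -> A.
Variables TA TB : (nat -> A) -> (nat -> A).
Hypothesis tau_surj : forall b : A, exists a : A, tau a = b.
Hypothesis TA_inj : injective_HA A TA.
Hypothesis TA_qm : quasi_modular A tau TA.
Hypothesis TB_qm : quasi_modular A tau TB.
Hypothesis pointwise : forall x, inHA A x -> exists lam : A, TB x = seq_smul A lam (TA x).

Lemma smul_TA_eq0 (c' : A) (x : nat -> A) : inHA A x ->
  seq_smul A (tau c') (TA x) = seq0 A <-> forall k, mul A c' (x k) = zero A.
Proof.
intro Hx. destruct TA_qm as [_ TA_smul].
rewrite <- TA_smul by exact Hx.
rewrite <- (quasi_modular_zero tau TA TA_qm). split.
- intros E k. apply TA_inj in E; [|apply inHA_smul, Hx | apply inHA_seq0].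
  exact (equal_f E k).
- intro H. f_equal. apply functional_extensionality; intro k. apply H.
Qed.

Lemma disjoint_images (y z : nat -> A) (c d : A) : inHA A y -> inHA A z ->
  (forall k, y k = zero A \/ z k = zero A) ->
  seq_smul A c (TA y) = seq_smul A d (TA z) -> seq_smul A c (TA y) = seq0 A.
Proof.
intros Hy Hz Hdisj E.
destruct (tau_surj c) as [c' <-], (tau_surj d) as [d' <-].
destruct TA_qm as [_ TA_smul].
rewrite <- !TA_smul in E by assumption.
apply TA_inj in E; [|apply inHA_smul; assumption ..].
apply smul_TA_eq0; [exact Hy|]. intro k.
assert (Ek := equal_f E k). unfold seq_smul in Ek.
destruct (Hdisj k) as [H|H]; rewrite H in *; [ring | rewrite Ek; ring].
Qed.

Lemma coefficient_mask (x : nat -> A) (P : nat -> bool) (lx : A) :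
  inHA A x -> eventually_const P ->
  TB x = seq_smul A lx (TA x) -> TB (mask P x) = seq_smul A lx (TA (mask P x)).
Proof.
intros Hx HP Ex.
set (y := mask P x). set (z := mask (fun k => negb (P k)) x).
assert (Hy : inHA A y) by (apply inHA_mask; auto).
assert (Hz : inHA A z) by (apply inHA_mask; auto; apply eventually_const_negb; auto).
destruct (pointwise _ Hy) as [ly Ey], (pointwise _ Hz) as [lz Ez].
destruct TA_qm as [TA_add _], TB_qm as [TB_add _].
assert (EA : TA x = seq_add A (TA y) (TA z))
  by (rewrite (mask_split P x) at 1; apply TA_add; auto).
assert (EB : TB x = seq_add A (TB y) (TB z))
  by (rewrite (mask_split P x) at 1; apply TB_add; auto).
assert (D : seq_smul A (subA lx ly) (TA y) = seq_smul A (subA lz lx) (TA z)).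
{ apply functional_extensionality; intro k.
  assert (Hk := equal_f EB k). rewrite Ex, Ey, Ez, EA in Hk.
  unfold seq_smul, seq_add, subA in *.
  transitivity (add A (mul A lx (add A (TA y k) (TA z k)))
                  (opp A (add A (mul A ly (TA y k)) (mul A lx (TA z k))))); [ring|].
  rewrite Hk. ring. }
apply disjoint_images in D; [|assumption .. |].
- rewrite Ey. symmetry. apply smul_sub_eq0, D.
- intro k. unfold y, z, mask. destruct (P k); auto.
Qed.

Lemma coefficient_coord (l0 : A) (x : nat -> A) (k : nat) :
  TB geom = seq_smul A l0 (TA geom) -> inHA A x ->
  TB (coord k x) = seq_smul A l0 (TA (coord k x)).
Proof.
intros H0 Hx.
assert (Ek : TB (coord k geom) = seq_smul A l0 (TA (coord k geom)))
  by (apply coefficient_mask; [apply inHA_geom | apply eventually_const_coord | exact H0]).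
destruct (tau_surj (mul A (x k) (geom_inv k))) as [m Hm].
destruct TA_qm as [_ TA_smul], TB_qm as [_ TB_smul].
assert (Hc : inHA A (coord k geom)) by apply inHA_coord, inHA_geom.
rewrite coord_geom, <- Hm, TA_smul, TB_smul, Ek by exact Hc.
apply functional_extensionality; intro j; unfold seq_smul; ring.
Qed.

Lemma coefficient_uniform (l0 : A) (x : nat -> A) :
  TB geom = seq_smul A l0 (TA geom) -> inHA A x -> TB x = seq_smul A l0 (TA x).
Proof.
intros H0 Hx. destruct (pointwise x Hx) as [lx Ex].
destruct (tau_surj (subA lx l0)) as [c' Hc].
assert (Hcoord : forall k, mul A c' (x k) = zero A).
{ intro k. assert (Hk : inHA A (coord k x)) by apply inHA_coord, Hx.
  assert (E : seq_smul A (tau c') (TA (coord k x)) = seq0 A).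
  { rewrite Hc. apply smul_sub_eq0.
    rewrite <- (coefficient_coord l0 x k H0 Hx).
    symmetry. apply coefficient_mask; [exact Hx | apply eventually_const_coord | exact Ex]. }
  apply (smul_TA_eq0 c' _ Hk) with (k := k) in E.
  unfold coord, mask in E. rewrite Nat.eqb_refl in E. exact E. }
rewrite Ex. apply smul_sub_eq0. rewrite <- Hc. apply smul_TA_eq0; assumption.
Qed.

End CoefficientMaps.
End StandardModule.

Theorem lemma9 (A : UnitalCStarAlgebra) (tau : A -> A)
  (TA TB : (nat -> A) -> (nat -> A)) :
  commutativeA A ->
  (forall b : A, exists a : A, tau a = b) ->
  maps_HA A TA -> maps_HA A TB ->
  injective_HA A TA -> injective_HA A TB ->
  continuous_HA A TA -> continuous_HA A TB ->
  quasi_modular A tau TA -> quasi_modular A tau TB ->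
  image_dim_ge2 A TA ->
  (forall x, inHA A x -> exists lam : A, TB x = seq_smul A lam (TA x)) ->
  exists lam : A, forall x, inHA A x -> TB x = seq_smul A lam (TA x).
Proof.
intros comm tau_surj _ _ TA_inj _ _ _ TA_qm TB_qm _ pointwise.
destruct (pointwise _ (inHA_geom A comm)) as [l0 H0].
exists l0. intros x Hx.
exact (coefficient_uniform A comm tau TA TB tau_surj TA_inj TA_qm TB_qm pointwise l0 x H0 Hx).
Qed.
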